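(* Let $M$ be a graded quasi-primaryful $R$-module. Then the set of all irreducible components of $qp.Spec_g(M)$ (quasi-Zariski topology) is $$\Phi=\{qp\text{-}V_M^g(Gr(q)M)\mid q\in qp\text{-}V_R^g(\mathrm{Ann}(M))\text{ and }Gr(q)\text{ is a minimal element of }V_R^g(\mathrm{Ann}(M))\text{ with respect to inclusion}\}.$$
   Context: $R=\bigoplus_{g\in G}R_g$ is a graded commutative ring with identity graded by a group $G$, $h(R)=\bigcup_g R_g$; $M$ is a graded $R$-module, $h(M)$ its homogeneous elements. $Gr(I)$ is the graded radical of a graded ideal $I$. $(K:_RM)=\{r: rM\subseteq K\}$. Graded prime submodule: proper graded $P$ with $rm\in P$ ($r\in h(R), m\in h(M)$) implying $m\in P$ or $r\in(P:_RM)$. $Gr_M(K)$: intersection of graded prime submodules containing $K$ ($M$ if none). Graded primeful property of $K$: for each graded prime $p\supseteq(K:_RM)$ there is a graded prime submodule $P\supseteq K$ with $(P:_RM)=p$. Graded quasi-primary submodule: proper graded $Q$ with $rm\in Q$ ($r\in h(R),m\in h(M)$) implying $r\in Gr((Q:_RM))$ or $m\in Gr_M(Q)$. $qp.Spec_g(M)$: graded quasi-primary submodules with the graded primeful property. $qp\text{-}V_M^g(K)=\{Q\in qp.Spec_g(M): Gr((Q:_RM))\supseteq Gr((K:_RM))\}$; the quasi-Zariski topology has closed sets exactly these. A graded quasi-primary ideal of $R$ is a proper graded ideal $q$ with $ab\in q$ ($a,b\in h(R)$) implying $a\in Gr(q)$ or $b\in Gr(q)$. For a graded ideal $I$: $qp\text{-}V_R^g(I)$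 is the set of graded quasi-primary ideals of $R$ containing $I$, and $V_R^g(I)$ the set of graded prime ideals of $R$ containing $I$. $M$ is graded quasi-primaryful if $M=0$, or $M\ne 0$ and for every $q\in qp\text{-}V_R^g(\mathrm{Ann}(M))$ there is $Q\in qp.Spec_g(M)$ with $Gr((Q:_RM))=Gr(q)$. An irreducible component is a maximal irreducible subset (a subset $A$ is irreducible if $A\subseteq A_1\cup A_2$, $A_i$ closed, implies $A\subseteq A_1$ or $A\subseteq A_2$). *)

From mathcomp Require Import all_boot all_algebra.
From Stdlib Require Import List.
Set Implicit Arguments. Unset Strict Implicit. Unset Printing Implicit Defensive.
Import GRing.Theory.
Local Open Scope ring_scope.

Record group_law (G : Type) := GroupLaw {
  gmul : G -> G -> G; gone : G; ginv : G -> G;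
  gmulA : forall x y z, gmul x (gmul y z) = gmul (gmul x y) z;
  gmul1 : forall x, gmul gone x = x;
  gmulV : forall x, gmul (ginv x) x = gone }.

(* r = sum_{g in s} f g is a decomposition into homogeneous components of
   pairwise distinct degrees (for the family of subgroups A g). *)
Definition hdecomp (G : Type) (T : zmodType) (A : G -> T -> Prop)
  (s : list G) (f : G -> T) (x : T) : Prop :=
  NoDup s /\ (forall g, A g (f g)) /\ x = \sum_(g <- s) f g.

(* A family of additive subgroups whose (internal) sum is direct and is everything. *)
Definition direct_decomposition (G : Type) (T : zmodType) (A : G -> T -> Prop) :=
  (forall g, A g 0 /\ forall x y, A g x -> A g y -> A g (x - y)) /\
  (forall x, exists s f, hdecomp A s f x) /\
  (forall s f, hdecomp A s f 0 -> forall g, In g s -> f g = 0).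

Record graded_ring (G : Type) (GL : group_law G) (R : comPzRingType) := GradedRing {
  rcomp : G -> R -> Prop;
  rcomp_direct : direct_decomposition rcomp;
  rcomp_mul : forall g h x y, rcomp g x -> rcomp h y -> rcomp (gmul GL g h) (x * y) }.

Record graded_module (G : Type) (GL : group_law G) (R : comPzRingType)
    (GR : graded_ring GL R) (M : lmodType R) := GradedModule {
  mcomp : G -> M -> Prop;
  mcomp_direct : direct_decomposition mcomp;
  mcomp_scale : forall g h r m, rcomp GR g r -> mcomp h m -> mcomp (gmul GL g h) (r *: m) }.

Section Defs.
Variables (G : Type) (GL : group_law G) (R : comPzRingType) (GR : graded_ring GL R).
Variables (M : lmodType R) (GM : graded_module GR M).

Definition subset (T : Type) (A B : T -> Prop) := forall x, A x -> B x.

Definition hR (r : R) := exists g, rcomp GR g r.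
Definition hM (m : M) := exists g, mcomp GM g m.

Definition graded_set (T : zmodType) (A : G -> T -> Prop) (N : T -> Prop) :=
  forall s f x, hdecomp A s f x -> N x -> forall g, In g s -> N (f g).

Definition is_ideal (I : R -> Prop) :=
  I 0 /\ (forall x y, I x -> I y -> I (x + y)) /\ (forall r x, I x -> I (r * x)).
Definition graded_ideal (I : R -> Prop) := is_ideal I /\ graded_set (rcomp GR) I.

Definition is_submodule (N : M -> Prop) :=
  N 0 /\ (forall x y, N x -> N y -> N (x + y)) /\ (forall r x, N x -> N (r *: x)).
Definition graded_submodule (N : M -> Prop) :=
  is_submodule N /\ graded_set (mcomp GM) N.

Definition Gr (I : R -> Prop) : R -> Prop := fun r =>
  forall s f, hdecomp (rcomp GR) s f r ->
    forall g, In g s -> exists n, (0 < n)%N /\ I (f g ^+ n).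

Definition colon (K : M -> Prop) : R -> Prop := fun r => forall m, K (r *: m).
Definition Ann : R -> Prop := colon (fun m => m = 0).

Definition graded_prime_ideal (p : R -> Prop) :=
  graded_ideal p /\ ~ p 1 /\
  forall a b, hR a -> hR b -> p (a * b) -> p a \/ p b.

Definition graded_qprimary_ideal (q : R -> Prop) :=
  graded_ideal q /\ ~ q 1 /\
  forall a b, hR a -> hR b -> q (a * b) -> Gr q a \/ Gr q b.

Definition proper_sub (N : M -> Prop) := exists m, ~ N m.

Definition graded_prime_submodule (P : M -> Prop) :=
  graded_submodule P /\ proper_sub P /\
  forall r m, hR r -> hM m -> P (r *: m) -> P m \/ colon P r.

(* Gr_M(K): intersection of graded prime submodules containing K (M if none) *)
Definition GrM (K : M -> Prop) : M -> Prop := fun m =>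
  forall P, graded_prime_submodule P -> subset K P -> P m.

Definition graded_primeful (K : M -> Prop) :=
  forall p, graded_prime_ideal p -> subset (colon K) p ->
    exists P, graded_prime_submodule P /\ subset K P /\ colon P = p.

Definition graded_qprimary_submodule (Q : M -> Prop) :=
  graded_submodule Q /\ proper_sub Q /\
  forall r m, hR r -> hM m -> Q (r *: m) -> Gr (colon Q) r \/ GrM Q m.

Definition qpSpec : (M -> Prop) -> Prop := fun Q =>
  graded_qprimary_submodule Q /\ graded_primeful Q.

Definition qpV_M (K : M -> Prop) : (M -> Prop) -> Prop := fun Q =>
  qpSpec Q /\ subset (Gr (colon K)) (Gr (colon Q)).

Definition qpV_R (I : R -> Prop) : (R -> Prop) -> Prop := fun q =>
  graded_qprimary_ideal q /\ subset I q.
Definition V_R (I : R -> Prop) : (R -> Prop) -> Prop := fun p =>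
  graded_prime_ideal p /\ subset I p.

Definition idealM (I : R -> Prop) : M -> Prop := fun m =>
  exists s : list (R * M), (forall p, In p s -> I p.1) /\
    m = \sum_(p <- s) p.1 *: p.2.

Definition graded_qprimaryful :=
  (forall m : M, m = 0) \/
  ((exists m : M, m <> 0) /\
   forall q, qpV_R Ann q -> exists Q, qpSpec Q /\ Gr (colon Q) = Gr q).

Definition qp_closed (A : (M -> Prop) -> Prop) :=
  exists K, graded_submodule K /\ A = qpV_M K.

Definition qp_irreducible (A : (M -> Prop) -> Prop) :=
  subset A qpSpec /\ (exists Q, A Q) /\
  forall A1 A2, qp_closed A1 -> qp_closed A2 ->
    subset A (fun Q => A1 Q \/ A2 Q) -> subset A A1 \/ subset A A2.

Definition qp_irreducible_component (A : (M -> Prop) -> Prop) :=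
  qp_irreducible A /\ forall B, qp_irreducible B -> subset A B -> B = A.

Definition Phi : ((M -> Prop) -> Prop) -> Prop := fun A =>
  exists q, qpV_R Ann q /\
    (V_R Ann (Gr q) /\ forall p, V_R Ann p -> subset p (Gr q) -> p = Gr q) /\
    A = qpV_M (idealM (Gr q)).

End Defs.

(* The map Q |-> Gr((Q :_R M)) sends qp.Spec_g(M) to graded primes of R, the
   primeful property being what lets primes of R be lifted to prime submodules;
   closed sets are then preimages of closed sets of the graded prime spectrum.
   Hence for an irreducible C the intersection I(C) of the Gr((Q : M)), Q in C,
   is a graded prime over Ann(M) (test C against the closed sets qp-V(aM), a
   homogeneous), while qp-V(pM) is irreducible with generic point any Q0 such
   that Gr((Q0 : M)) = p; the quasi-primaryful hypothesis supplies such a Q0 for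
   every graded prime p over Ann(M). Maximality of components then matches them
   with the minimal graded primes over Ann(M). *)

From Stdlib Require Import List.
From mathcomp Require Import all_boot all_algebra boolp.
From mathcomp Require classical_sets.
Set Implicit Arguments. Unset Strict Implicit. Unset Printing Implicit Defensive.
Import GRing.Theory.
Local Open Scope ring_scope.

Section HomogeneousComponents.
Variables (G : Type) (T : zmodType) (A : G -> T -> Prop).
Hypothesis dA : direct_decomposition A.

Lemma homog0 g : A g 0. Proof. by case: dA => H _; case: (H g). Qed.

Lemma homogB g x y : A g x -> A g y -> A g (x - y).
Proof. by case: dA => H _; case: (H g) => _; apply. Qed.

Lemma homogD g x y : A g x -> A g y -> A g (x + y).
Proof.
move=> Ax Ay; have -> : x + y = x - (0 - y) by rewrite sub0r opprK.
by apply: homogB => //; apply: homogB => //; apply: homog0.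
Qed.

Lemma big_In_eq (I : Type) (l : list I) (F F' : I -> T) :
  (forall i, In i l -> F i = F' i) -> \sum_(i <- l) F i = \sum_(i <- l) F' i.
Proof.
elim: l => [|i l IH] E; first by rewrite !big_nil.
rewrite !big_cons E; last by left.
by rewrite IH // => j Hj; apply: E; right.
Qed.

Lemma big_closed (N : T -> Prop) (I : Type) (l : list I) (y : I -> T) :
  N 0 -> (forall a b, N a -> N b -> N (a + b)) ->
  (forall i, In i l -> N (y i)) -> N (\sum_(i <- l) y i).
Proof.
move=> N0 ND; elim: l => [|i l IH] Ny; first by rewrite big_nil.
by rewrite big_cons; apply: ND; [apply: Ny; left | apply: IH => j Hj; apply: Ny; right].
Qed.

Lemma big_support (s t : list G) (F : G -> T) : NoDup s -> NoDup t -> incl s t ->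
  (forall g, In g t -> ~ In g s -> F g = 0) ->
  \sum_(g <- t) F g = \sum_(g <- s) F g.
Proof.
elim: t s => [|b t IH] s Ns Nbt st F0.
  by case: s st {Ns F0} => [|a s] st //; case: (st a); left.
case/NoDup_cons_iff: Nbt => bt Nt.
rewrite big_cons; case: (pselect (In b s)) => bs.
  have [s1 [s2 Es]] := in_split _ _ bs; subst s.
  rewrite big_cat /= big_cons addrCA -big_cat; congr (_ + _).
  have bs12 := NoDup_remove_2 _ _ _ Ns.
  apply: IH; first exact: NoDup_remove_1 Ns.
  - done.
  - move=> g g12; have /st [Eg|//] : In g (s1 ++ b :: s2).
      by move: g12; rewrite !in_app_iff /=; tauto.
    by subst g.
  move=> g gt g12; apply: F0; first by right.
  rewrite in_app_iff /= => -[g1 | [Eg | g2]].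
  - by apply: g12; rewrite in_app_iff; left.
  - by subst g.
  - by apply: g12; rewrite in_app_iff; right.
rewrite F0 ?add0r; [|by left|by []].
apply: IH => // [g gs | g gt]; last by apply: F0; right.
by case: (st g gs) => // Eg; subst g.
Qed.

Definition lunion (s s' : list G) := nodup (fun g h => pselect (g = h)) (s ++ s').

Lemma lunionP s s' g : In g (lunion s s') <-> In g s \/ In g s'.
Proof. by rewrite nodup_In in_app_iff. Qed.

Lemma NoDup_lunion s s' : NoDup (lunion s s').
Proof. exact: NoDup_nodup. Qed.

Lemma incl_lunionl s s' : incl s (lunion s s').
Proof. by move=> g gs; apply/lunionP; left. Qed.

Lemma incl_lunionr s s' : incl s' (lunion s s').
Proof. by move=> g gs; apply/lunionP; right. Qed.

Definition restr (s : list G) (f : G -> T) g := if pselect (In g s) then f g else 0.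

Lemma restr_in s f g : In g s -> restr s f g = f g.
Proof. by rewrite /restr; case: pselect. Qed.

Lemma restr_notin s f g : ~ In g s -> restr s f g = 0.
Proof. by rewrite /restr; case: pselect. Qed.

Lemma restr_homog s f g : (forall h, A h (f h)) -> A g (restr s f g).
Proof.
by move=> Af; rewrite /restr; case: (pselect (In g s)) => ?; [exact: Af | exact: homog0].
Qed.

Lemma big_restr s t f : NoDup s -> NoDup t -> incl s t ->
  \sum_(g <- t) restr s f g = \sum_(g <- s) f g.
Proof.
move=> Ns Nt st; rewrite (big_support Ns Nt st) => [|g _]; last exact: restr_notin.
by apply: big_In_eq => g; apply: restr_in.
Qed.

Lemma hdecomp_restr_eq s f s' f' x : hdecomp A s f x -> hdecomp A s' f' x ->
  restr s f =1 restr s' f'.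
Proof.
move=> [Ns [Af Ex]] [Ns' [Af' Ex']] g.
have D0 : hdecomp A (lunion s s') (fun h => restr s f h - restr s' f' h) 0.
  split; first exact: NoDup_lunion.
  split; first by move=> h; apply: homogB; apply: restr_homog.
  rewrite sumrB !big_restr -?Ex -?Ex' ?subrr //;
    by [apply: NoDup_lunion | apply: incl_lunionl | apply: incl_lunionr].
case: (pselect (In g (lunion s s'))) => [gt | /lunionP gst].
  by apply/eqP; rewrite -subr_eq0; apply/eqP; case: dA => _ [_ U]; exact: U _ _ D0 g gt.
by rewrite !restr_notin // => ?; apply: gst; [right | left].
Qed.

Lemma hdecomp_exists x : exists sf : list G * (G -> T), hdecomp A sf.1 sf.2 x.
Proof. by case: dA => _ [/(_ x) [s [f Hx]] _]; exists (s, f). Qed.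

Definition hsupp x := (sval (cid (hdecomp_exists x))).1.
Definition hcomp x := restr (hsupp x) (sval (cid (hdecomp_exists x))).2.

Lemma hcompE s f x : hdecomp A s f x -> hcomp x =1 restr s f.
Proof. exact: hdecomp_restr_eq (svalP (cid (hdecomp_exists x))). Qed.

Lemma hcomp_in s f x g : hdecomp A s f x -> In g s -> hcomp x g = f g.
Proof. by move=> Hx gs; rewrite (hcompE Hx) restr_in. Qed.

Lemma hcomp_notin x g : ~ In g (hsupp x) -> hcomp x g = 0.
Proof. exact: restr_notin. Qed.

Lemma hcomp_homog x g : A g (hcomp x g).
Proof. by apply: restr_homog; case: (svalP (cid (hdecomp_exists x))) => _ []. Qed.

Lemma hdecomp_hcomp x : hdecomp A (hsupp x) (hcomp x) x.
Proof.
case: (svalP (cid (hdecomp_exists x))) => Ns [_ Ex].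
split=> //; split; first exact: hcomp_homog.
by rewrite {1}Ex; apply: big_In_eq => g gs; rewrite /hcomp restr_in.
Qed.

Lemma hcomp_sum x : x = \sum_(g <- hsupp x) hcomp x g.
Proof. by case: (hdecomp_hcomp x) => _ []. Qed.

Lemma hcomp_eq t F x : NoDup t -> (forall g, A g (F g)) ->
  (forall g, ~ In g t -> F g = 0) -> x = \sum_(g <- t) F g -> hcomp x =1 F.
Proof.
move=> Nt AF F0 Ex g; rewrite (@hcompE t F) //.
by rewrite /restr; case: pselect => // gt; rewrite F0.
Qed.

Lemma hcomp0 g : hcomp 0 g = 0.
Proof.
apply: (@hcomp_eq nil (fun=> 0)) => //; first exact: NoDup_nil.
- by move=> ?; apply: homog0.
by rewrite big_nil.
Qed.

Lemma hcompD x y g : hcomp (x + y) g = hcomp x g + hcomp y g.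
Proof.
have [[Nx _] [Ny _]] := (hdecomp_hcomp x, hdecomp_hcomp y).
have Nt := NoDup_lunion (hsupp x) (hsupp y).
move: g; apply: (hcomp_eq Nt) => [g | g /lunionP gt | ].
- exact/homogD/hcomp_homog/hcomp_homog.
- by rewrite !hcomp_notin ?addr0 // => ?; apply: gt; [right | left].
rewrite big_split /= (big_support Nx Nt) ?(big_support Ny Nt) -?hcomp_sum //;
  by [apply: incl_lunionl | apply: incl_lunionr | move=> h _; apply: hcomp_notin].
Qed.

Lemma hcomp_homogE h x : A h x -> forall g, hcomp x g = if pselect (g = h) then x else 0.
Proof.
move=> Ax; apply: (@hcomp_eq [:: h]).
- by constructor; [case | constructor].
- by move=> g; case: (pselect (g = h)) => [Eg | nE] /=; [subst | apply: homog0].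
- by move=> g gh; case: (pselect (g = h)) => // Eg; case: gh; left.
by rewrite big_cons big_nil addr0; case: (pselect (h = h)).
Qed.

Lemma graded_setP (N : T -> Prop) : N 0 ->
  graded_set A N <-> forall x, N x -> forall g, N (hcomp x g).
Proof.
move=> N0; split => [NA x Nx g | NA s f x Hx Nx g gs].
  case: (pselect (In g (hsupp x))) => gx; last by rewrite hcomp_notin.
  exact: NA (hdecomp_hcomp x) Nx g gx.
by rewrite -(hcomp_in Hx gs); apply: NA.
Qed.

Lemma hcomp_closed (N : T -> Prop) x : N 0 -> (forall a b, N a -> N b -> N (a + b)) ->
  (forall g, N (hcomp x g)) -> N x.
Proof. by move=> N0 ND Nx; rewrite [x]hcomp_sum; apply: big_closed. Qed.

Lemma hcomp_reindex (d d' : G -> G) (F : G -> T) s x : cancel d d' -> cancel d' d ->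
  NoDup s -> (forall j, A (d j) (F j)) -> (forall j, ~ In j s -> F j = 0) ->
  x = \sum_(j <- s) F j -> forall g, hcomp x g = F (d' g).
Proof.
move=> dK d'K Ns AF F0 Ex; apply: (@hcomp_eq (map d s)).
- by apply: NoDup_map_NoDup_ForallPairs => // a b _ _ /(can_inj dK).
- by move=> g; rewrite -{1}(d'K g).
- by move=> g gs; apply: F0 => js; apply: gs; rewrite -(d'K g); apply: in_map.
by rewrite Ex; elim: s {Ns F0 Ex} => [|a s IH]; rewrite /= ?big_nil // !big_cons dK IH.
Qed.

End HomogeneousComponents.

Section GroupLaw.
Variables (G : Type) (GL : group_law G).
Local Notation "x ** y" := (gmul GL x y) (at level 40).

Lemma gmulgV g : g ** ginv GL g = gone GL.
Proof.
have V2 : ginv GL (ginv GL g) ** ginv GL g = gone GL by apply: gmulV.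
by rewrite -(gmul1 GL (g ** _)) -{1}V2 -gmulA (gmulA GL (ginv GL g)) gmulV gmul1.
Qed.

Lemma gmulg1 g : g ** gone GL = g.
Proof. by rewrite -(gmulV GL g) gmulA gmulgV gmul1. Qed.

End GroupLaw.

Section GradedRing.
Variables (G : Type) (GL : group_law G) (R : comPzRingType) (GR : graded_ring GL R).

Local Notation "x ** y" := (gmul GL x y) (at level 40).
Local Notation inv := (ginv GL).
Local Notation RD := (rcomp_direct GR).
Local Notation rc := (hcomp RD).
Local Notation Gr := (Gr GR).

Lemma rc_homogMl k a x g : rcomp GR k a -> rc (a * x) g = a * rc x (inv k ** g).
Proof.
move=> Ha; apply: (hcomp_reindex RD (d := gmul GL k) (d' := gmul GL (inv k))
  (F := fun j => a * rc x j) (s := hsupp RD x)).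
- by move=> h; rewrite gmulA gmulV gmul1.
- by move=> h; rewrite gmulA gmulgV gmul1.
- exact: (hdecomp_hcomp RD x).1.
- by move=> j; apply: rcomp_mul => //; apply: hcomp_homog.
- by move=> j js; rewrite hcomp_notin // mulr0.
by rewrite {1}[x](hcomp_sum RD) mulr_sumr.
Qed.

Lemma hRX a n : hR GR a -> hR GR (a ^+ n.+1).
Proof.
move=> [k Ha]; elim: n => [|n [h Hn]]; first by exists k; rewrite expr1.
by exists (k ** h); rewrite exprS; apply: rcomp_mul.
Qed.

Section Ideal.
Variable I : R -> Prop.
Hypothesis idI : is_ideal I.

Lemma ideal0 : I 0. Proof. by case: idI. Qed.
Lemma idealD x y : I x -> I y -> I (x + y). Proof. by case: idI => _ [D _]; apply: D. Qed.
Lemma idealMl r x : I x -> I (r * x). Proof. by case: idI => _ [_ M]; apply: M. Qed.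
Lemma idealMr r x : I x -> I (x * r). Proof. by rewrite mulrC; apply: idealMl. Qed.

Lemma idealMn x n : I x -> I (x *+ n).
Proof.
by move=> Ix; elim: n => [|n IH]; rewrite ?mulr0n ?mulrS; [exact: ideal0 | exact: idealD].
Qed.

Definition rad (r : R) := exists n, (0 < n)%N /\ I (r ^+ n).

Lemma rad0 : rad 0. Proof. by exists 1%N; rewrite expr1; split => //; apply: ideal0. Qed.

Lemma radD a b : rad a -> rad b -> rad (a + b).
Proof.
move=> [n [n0 Ia]] [m [m0 Ib]]; exists (n + m)%N; split; first by rewrite addn_gt0 n0.
rewrite exprDn; apply: big_ind => [|x y|[i lti] _]; [exact: ideal0 | exact: idealD |].
apply: idealMn => /=; case: (leqP m i) => [lemi | ltim].
  have -> : b ^+ i = b ^+ (i - m) * b ^+ m by rewrite -exprD subnK.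
  by rewrite mulrA; apply: idealMl.
have lenmi : (n <= n + m - i)%N by rewrite -addnBA ?leq_addr // ltnW.
have -> : a ^+ (n + m - i) = a ^+ (n + m - i - n) * a ^+ n by rewrite -exprD subnK.
by rewrite mulrAC; apply: idealMl.
Qed.

Lemma GrE r : Gr I r <-> forall g, rad (rc r g).
Proof.
split => [Grr g | radr s f Hr g gs].
  case: (pselect (In g (hsupp RD r))) => gr; last by rewrite hcomp_notin //; exact: rad0.
  exact: Grr (hdecomp_hcomp RD r) g gr.
by rewrite -(hcomp_in RD Hr gs); exact: radr.
Qed.

Lemma Gr_rad r : Gr I r -> rad r.
Proof.
by move/GrE=> radr; apply: (hcomp_closed (dA := RD)); [exact: rad0 | exact: radD |].
Qed.

Lemma Gr_homog k a : rcomp GR k a -> Gr I a <-> rad a.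
Proof.
move=> Ha; rewrite GrE; split => [/(_ k) | rada g]; rewrite (hcomp_homogE RD Ha).
  by case: (pselect (k = k)).
by case: (pselect (g = k)) => // nE /=; exact: rad0.
Qed.

Lemma Gr_homogX a n : hR GR a -> Gr I (a ^+ n.+1) -> Gr I a.
Proof.
move=> [k Ha] /Gr_rad [m [m0 Im]]; apply/(Gr_homog Ha); exists (n.+1 * m)%N.
by rewrite exprM muln_gt0.
Qed.

End Ideal.

Lemma Gr_mono (I J : R -> Prop) : subset I J -> subset (Gr I) (Gr J).
Proof.
move=> IJ x GrIx s f Hx g gs; have [n [n0 In]] := GrIx s f Hx g gs.
by exists n; split => //; apply: IJ.
Qed.

Lemma graded_ideal_sub_Gr (I : R -> Prop) : graded_ideal GR I -> subset I (Gr I).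
Proof.
move=> [idI gI] x Ix; apply/GrE => // g; exists 1%N; rewrite expr1; split => //.
by move/(graded_setP RD (ideal0 idI)): gI; apply.
Qed.

Lemma Gr_graded_ideal (I : R -> Prop) : graded_ideal GR I -> graded_ideal GR (Gr I).
Proof.
move=> [idI gI]; have I0 := ideal0 idI.
have Gr0 : Gr I 0 by apply/(GrE idI) => g; rewrite hcomp0; exact: rad0.
have GrD x y : Gr I x -> Gr I y -> Gr I (x + y).
  by move=> /(GrE idI) Gx /(GrE idI) Gy; apply/(GrE idI) => g; rewrite hcompD; apply: radD.
have GrMhomog k a x : rcomp GR k a -> Gr I x -> Gr I (a * x).
  move=> Ha /(GrE idI) Gx; apply/(GrE idI) => g; rewrite (rc_homogMl _ _ Ha).
  by case: (Gx (inv k ** g)) => n [n0 In]; exists n; rewrite exprMn; split => //; apply: idealMl.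
split; first split => //; first split => //.
  move=> r x Gx; rewrite [r](hcomp_sum RD) mulr_suml.
  by apply: big_closed => // g _; apply: GrMhomog Gx; apply: hcomp_homog.
apply/(graded_setP RD Gr0) => x /(GrE idI) Gx g; apply/(GrE idI) => h.
rewrite (hcomp_homogE RD (hcomp_homog RD x g)).
by case: (pselect (h = g)) => [_ | nE] /=; [exact: Gx | exact: rad0].
Qed.

Lemma prime_rad (p : R -> Prop) a : graded_prime_ideal GR p -> hR GR a -> rad p a -> p a.
Proof.
move=> [_ [_ pP]] ha [[|n] [// _]]; elim: n => [|n IH]; first by rewrite expr1.
by rewrite exprS => /(pP _ _ ha (hRX n ha)) [].
Qed.

Lemma Gr_prime (p : R -> Prop) : graded_prime_ideal GR p -> Gr p = p.
Proof.
move=> pp; have [[idp _] _] := pp; apply/predeqP => x; split => [|px]; last first.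
  exact: (graded_ideal_sub_Gr (proj1 pp) px).
move/GrE=> radx; apply: (hcomp_closed (dA := RD)); [exact: ideal0 | exact: idealD |].
by move=> g; apply: prime_rad => //; [exists g; apply: hcomp_homog | apply: radx].
Qed.

Lemma graded_ideal_meet (J : Type) (P : J -> Prop) (F : J -> R -> Prop) :
  (forall i, P i -> graded_ideal GR (F i)) -> graded_ideal GR (fun r => forall i, P i -> F i r).
Proof.
move=> gF; have idF i Pi := proj1 (gF i Pi).
have F0 : forall i, P i -> F i 0 by move=> i Pi; apply: ideal0 (idF i Pi).
split; first split => //; first split.
- by move=> x y Fx Fy i Pi; apply: (idealD (idF i Pi) (Fx i Pi) (Fy i Pi)).
- by move=> r x Fx i Pi; apply: (idealMl (idF i Pi) _ (Fx i Pi)).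
apply/(graded_setP RD F0) => x Fx g i Pi.
by have [_ gFi] := gF i Pi; move/(graded_setP RD (F0 i Pi)): gFi; apply; apply: Fx.
Qed.

Lemma Gr_sub_prime (I p : R -> Prop) : graded_prime_ideal GR p -> subset I p -> subset (Gr I) p.
Proof. by move=> pp Ip x /(Gr_mono Ip); rewrite Gr_prime. Qed.

Lemma prime_qprimary (p : R -> Prop) : graded_prime_ideal GR p -> graded_qprimary_ideal GR p.
Proof.
move=> pp; have [gp [p1 pP]] := pp; split=> //; split=> // a b ha hb /(pP _ _ ha hb).
by case=> [pa | pb]; [left | right]; apply: graded_ideal_sub_Gr.
Qed.

Definition adjoin (p : R -> Prop) (a : R) : R -> Prop :=
  fun r => exists x y, p x /\ r = x + y * a.

Lemma adjoin_graded_ideal p k a : graded_ideal GR p -> rcomp GR k a ->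
  graded_ideal GR (adjoin p a).
Proof.
move=> [idp gp] Ha; have p0 := ideal0 idp.
have J0 : adjoin p a 0 by exists 0, 0; rewrite mul0r addr0.
split; first split => //; first split.
- move=> _ _ [x [y [px ->]]] [x' [y' [px' ->]]]; exists (x + x'), (y + y').
  by rewrite mulrDl addrACA; split => //; apply: idealD.
- move=> r _ [x [y [px ->]]]; exists (r * x), (r * y).
  by rewrite mulrDr mulrA; split => //; apply: idealMl.
apply/(graded_setP RD J0) => _ [x [y [px ->]]] g.
exists (rc x g), (rc y (inv k ** g)); split; first by move/(graded_setP RD p0): gp; apply.
by rewrite hcompD mulrC (rc_homogMl _ _ Ha) mulrC.
Qed.

Section Powers.
Variables (I : R -> Prop) (b : R).

Definition avoiding (X : R -> Prop) :=
  graded_ideal GR X /\ forall n, (0 < n)%N -> ~ X (b ^+ n).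

Lemma maximal_avoiding_prime p : hR GR b -> avoiding p ->
  (forall Y, avoiding Y -> subset p Y -> subset Y p) -> graded_prime_ideal GR p.
Proof.
move=> hb [gp pb] maxp; have [idp _] := gp.
have pow_in_adjoin a : hR GR a -> ~ p a -> exists n, (0 < n)%N /\ adjoin p a (b ^+ n).
  move=> [k Ha] npa; apply: contrapT => nb; apply: npa.
  apply: (maxp (adjoin p a)) => [| r pr |]; last first.
  - by exists 0, 1; rewrite mul1r add0r; split => //; apply: ideal0.
  - by exists r, 0; rewrite mul0r addr0.
  split; first exact: adjoin_graded_ideal gp Ha.
  by move=> n n0 Jbn; apply: nb; exists n.
split => //; split.
  by move=> p1; apply: (pb 1%N) => //; rewrite -(mulr1 (b ^+ 1)); apply: idealMl.
move=> a c ha hc pac; apply: contrapT => /not_orP [npa npc].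
have [n [n0 [x [y [px En]]]]] := pow_in_adjoin a ha npa.
have [m [m0 [x' [y' [px' Em]]]]] := pow_in_adjoin c hc npc.
apply: (pb (n + m)%N); first by rewrite addn_gt0 n0.
rewrite exprD En Em mulrDl; apply: (idealD idp); first exact: idealMr.
by rewrite mulrDr mulrACA; apply: (idealD idp); apply: idealMl.
Qed.

(* Zorn's lemma is applied to the X with I \/ X avoiding, so that the empty chain
   is harmless: its union gives back I. *)
Let IU (X : R -> Prop) r := I r \/ X r.

Hypothesis avI : avoiding I.

Lemma avoiding_chain_union (F : (R -> Prop) -> Prop) :
  (forall X, F X -> avoiding (IU X)) -> classical_sets.total_on F classical_sets.subset ->
  avoiding (IU (fun r => exists2 X, F X & X r)).
Proof.
move=> avF Ftot; have [[idI gI] Ib] := avI; have I0 := ideal0 idI.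
pose U := IU (fun r => exists2 X, F X & X r).
have UX X : F X -> subset (IU X) U by move=> FX r [Ir | Xr]; [left | right; exists X].
have in_member x : U x -> I x \/ exists2 X, F X & IU X x.
  by case=> [Ix | [X FX Xx]]; [left | right; exists X => //; right].
have common x y : U x -> U y -> (I x /\ I y) \/ exists2 X, F X & IU X x /\ IU X y.
  case/in_member => [Ix | [X FX Xx]] /in_member [Iy | [Y FY Yy]]; first by left.
  - by right; exists Y => //; split => //; left.
  - by right; exists X => //; split => //; left.
  right; case: (Ftot X Y FX FY) => [XY | YX].
    by exists Y => //; split => //; case: Xx => [Ix | /XY Yx]; [left | right].
  by exists X => //; split => //; case: Yy => [Iy | /YX Xy]; [left | right].
split; first split; first split; first by left.
- split.
  + move=> x y Ux Uy; case: (common x y Ux Uy) => [[Ix Iy] | [X FX [Xx Xy]]].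
      by left; apply: idealD.
    have [[idX _] _] := avF X FX.
    by apply: (UX X FX); apply: idealD.
  + move=> r x /in_member [Ix | [X FX Xx]]; first by left; apply: idealMl.
    have [[idX _] _] := avF X FX.
    by apply: (UX X FX); apply: idealMl.
- apply/(graded_setP RD (or_introl I0)) => x /in_member [Ix | [X FX Xx]] g.
    by left; move/(graded_setP RD I0): gI; apply.
  have [[idX gX] _] := avF X FX.
  by apply: (UX X FX); move/(graded_setP RD (ideal0 idX)): gX; apply.
move=> n n0 /in_member [Ibn | [X FX Xbn]]; first exact: (Ib n n0 Ibn).
by have [_ Xb] := avF X FX; apply: Xb n0 _.
Qed.

Lemma exists_maximal_avoiding :
  exists p, avoiding p /\ subset I p /\ forall Y, avoiding Y -> subset p Y -> subset Y p.
Proof.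
have [X [avX maxX]] := classical_sets.Zorn_bigcup avoiding_chain_union.
exists (IU X); split => //; split => [r Ir | Y avY XY r Yr]; first by left.
apply: contrapT => nXr.
have XltY : classical_sets.proper X Y.
  split => [s Xs | YX]; first by apply: XY; right.
  by apply: nXr; right; apply: YX.
apply: (maxX Y XltY); suff -> : IU Y = Y by [].
by apply/predeqP => s; split => [[Is | //] | Ys]; [apply: XY; left | right].
Qed.

Lemma graded_prime_avoiding_powers : hR GR b ->
  exists p, graded_prime_ideal GR p /\ subset I p /\ ~ p b.
Proof.
move=> hb; have [p [avp [Ip maxp]]] := exists_maximal_avoiding.
exists p; split; first exact: maximal_avoiding_prime.
by split => // pb; case: avp => _ /(_ 1%N isT); rewrite expr1.
Qed.

End Powers.

Lemma graded_prime_avoiding (I : R -> Prop) x : graded_ideal GR I -> ~ Gr I x ->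
  exists p, graded_prime_ideal GR p /\ subset I p /\ ~ p x.
Proof.
move=> [idI gI] nGrx.
have [g nrad] : exists g, ~ rad I (hcomp RD x g).
  by apply/existsNP => radx; apply: nGrx; apply/(GrE idI).
have [p [pp [Ip npg]]] : exists p, graded_prime_ideal GR p /\ subset I p /\ ~ p (hcomp RD x g).
  apply: graded_prime_avoiding_powers; first by split=> // n n0 Ign; apply: nrad; exists n.
  by exists g; apply: hcomp_homog.
exists p; split=> //; split=> // px; apply: npg.
by have [[idp gp] _] := pp; move/(graded_setP RD (ideal0 idp)): gp; apply.
Qed.

Lemma GrP (I : R -> Prop) x : graded_ideal GR I ->
  Gr I x <-> forall p, graded_prime_ideal GR p -> subset I p -> p x.
Proof.
move=> gI; split => [Grx p pp Ip | Px]; first exact: Gr_sub_prime Grx.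
apply: contrapT => nGrx; have [p [pp [Ip npx]]] := graded_prime_avoiding gI nGrx.
exact: npx (Px p pp Ip).
Qed.

Section GradedModule.
Variables (M : lmodType R) (GM : graded_module GR M).

Local Notation MD := (mcomp_direct GM).
Local Notation mc := (hcomp MD).
Local Notation GrC Q := (Gr (colon Q)).
Local Notation IM I := (idealM (M := M) I).

Lemma mc_homogZl k a m g : rcomp GR k a -> mc (a *: m) g = a *: mc m (inv k ** g).
Proof.
move=> Ha; apply: (hcomp_reindex MD (d := gmul GL k) (d' := gmul GL (inv k))
  (F := fun j => a *: mc m j) (s := hsupp MD m)).
- by move=> h; rewrite gmulA gmulV gmul1.
- by move=> h; rewrite gmulA gmulgV gmul1.
- exact: (hdecomp_hcomp MD m).1.
- by move=> j; apply: mcomp_scale => //; apply: hcomp_homog.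
- by move=> j js; rewrite hcomp_notin // scaler0.
by rewrite {1}[m](hcomp_sum MD) scaler_sumr.
Qed.

Lemma mc_homogZr h r m g : mcomp GM h m -> mc (r *: m) g = rc r (g ** inv h) *: m.
Proof.
move=> Hm; apply: (hcomp_reindex MD (d := fun j => j ** h) (d' := fun j => j ** inv h)
  (F := fun j => rc r j *: m) (s := hsupp RD r)).
- by move=> j; rewrite -gmulA gmulgV gmulg1.
- by move=> j; rewrite -gmulA gmulV gmulg1.
- exact: (hdecomp_hcomp RD r).1.
- by move=> j; apply: mcomp_scale => //; apply: hcomp_homog.
- by move=> j js; rewrite hcomp_notin // scale0r.
by rewrite {1}[r](hcomp_sum RD) scaler_suml.
Qed.

Section Submodule.
Variable N : M -> Prop.
Hypothesis subN : is_submodule N.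

Lemma submod0 : N 0. Proof. by case: subN. Qed.
Lemma submodD x y : N x -> N y -> N (x + y). Proof. by case: subN => _ [D _]; apply: D. Qed.
Lemma submodZ r x : N x -> N (r *: x). Proof. by case: subN => _ [_ Z]; apply: Z. Qed.

Lemma submod_homog_full : (forall m, hM GM m -> N m) -> forall m, N m.
Proof.
move=> Nh m; apply: (hcomp_closed (dA := MD)); [exact: submod0 | exact: submodD |].
by move=> g; apply: Nh; exists g; apply: hcomp_homog.
Qed.

Lemma Ann_sub_colon : subset (Ann M) (colon N).
Proof. by move=> r Annr m; rewrite Annr; apply: submod0. Qed.

Lemma idealM_sub (I : R -> Prop) : subset I (colon N) -> subset (idealM I) N.
Proof.
move=> IN _ [s [sI ->]]; apply: big_closed; [exact: submod0 | exact: submodD |].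
by move=> i si; apply: IN; apply: sI.
Qed.

End Submodule.

Lemma colon_graded_ideal Q : graded_submodule GM Q -> graded_ideal GR (colon Q).
Proof.
move=> [subQ gQ]; have C0 : colon Q 0 by move=> m; rewrite scale0r; apply: submod0.
split; first split => //; first split.
- by move=> x y Cx Cy m; rewrite scalerDl; apply: submodD.
- by move=> r x Cx m; rewrite -scalerA; apply: submodZ.
apply/(graded_setP RD C0) => r Cr g m; rewrite [m](hcomp_sum MD) scaler_sumr.
apply: big_closed => [|x y|h _]; [exact: submod0 | exact: submodD |].
move/(graded_setP MD (submod0 subQ)): gQ => /(_ _ (Cr (mc m h)) (g ** h)).
by rewrite (mc_homogZr _ _ (hcomp_homog MD m h)) -gmulA gmulgV gmulg1.
Qed.

Lemma qpSpec_colon_graded_ideal Q : qpSpec GM Q -> graded_ideal GR (colon Q).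
Proof. by case=> [[gQ _] _]; exact: colon_graded_ideal gQ. Qed.

Lemma qpSpec_notGrC1 Q : qpSpec GM Q -> ~ GrC Q 1.
Proof.
move=> sQ /(Gr_rad (qpSpec_colon_graded_ideal sQ).1) [n [_ Qn]].
by have [[_ [[m nQm] _]] _] := sQ; apply: nQm; move: (Qn m); rewrite expr1n scale1r.
Qed.

Lemma qpSpec_primeful Q p : qpSpec GM Q -> graded_prime_ideal GR p -> subset (GrC Q) p ->
  exists P, graded_prime_submodule GM P /\ subset Q P /\ colon P = p.
Proof.
move=> [gQ primeful] pp GrQp; apply: primeful => // r Qr.
by apply: GrQp; apply: graded_ideal_sub_Gr; first exact: colon_graded_ideal gQ.1.
Qed.

(* A graded prime p over (Q : M) missing b lifts to a graded prime submodule
   P over Q with (P : M) = p; if a were not in Gr((Q : M)), quasi-primariness would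
   put each homogeneous b^(n+1) m in Gr_M(Q), inside P, and primeness of P would
   give m in P, i.e. P = M. *)
Lemma GrC_homogXM Q a b n : qpSpec GM Q -> hR GR a -> hR GR b -> ~ GrC Q b ->
  colon Q (a ^+ n.+1 * b ^+ n.+1) -> GrC Q a.
Proof.
move=> sQ ha hb nGrb Qab; have gC := qpSpec_colon_graded_ideal sQ.
have [p [pp [Cp npb]]] := graded_prime_avoiding gC nGrb.
have [P [primeP [QP CP]]] := qpSpec_primeful sQ pp (Gr_sub_prime pp Cp).
have [[subP _] [[m0 nPm0] Pprime]] := primeP.
apply: contrapT => nGra; apply: nPm0; apply: (submod_homog_full subP) => m hm.
have [[_ [_ Qqp]] _] := sQ.
have hbm : hM GM (b ^+ n.+1 *: m).
  by have [[k Hb] [h Hm]] := (hRX n hb, hm); exists (k ** h); apply: mcomp_scale.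
case: (Qqp _ _ (hRX n ha) hbm); first by rewrite scalerA; apply: Qab.
  by move/(Gr_homogX (proj1 gC) ha).
move=> /(_ P primeP QP) Pbm; case: (Pprime _ _ (hRX n hb) hm Pbm) => // Pbn.
by case: npb; apply: (prime_rad pp hb); exists n.+1; rewrite -CP.
Qed.

Lemma qpSpec_GrC_prime Q : qpSpec GM Q -> graded_prime_ideal GR (GrC Q).
Proof.
move=> sQ; have gC := qpSpec_colon_graded_ideal sQ.
split; first exact: Gr_graded_ideal.
split; first exact: qpSpec_notGrC1.
move=> a b ha hb Grab; have [[ka Ha] [kb Hb]] := (ha, hb).
have Hab : rcomp GR (ka ** kb) (a * b) by apply: rcomp_mul.
have [n [n0 Qabn]] := (Gr_homog (proj1 gC) Hab).1 Grab.
case: n n0 Qabn => [// | n _ Qabn].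
case: (pselect (GrC Q b)) => [Grb | nGrb]; [right | left] => //.
by apply: (GrC_homogXM (n := n) sQ ha hb nGrb); rewrite -exprMn.
Qed.

Lemma Gr_colon_sub_GrC Q (K : M -> Prop) : qpSpec GM Q -> subset K (IM (GrC Q)) ->
  subset (Gr (colon K)) (GrC Q).
Proof.
move=> sQ KI r GrKr; apply/(GrP _ (qpSpec_colon_graded_ideal sQ)) => p pp Cp.
have GrQp := Gr_sub_prime pp Cp.
have [P [[[subP _] _] [QP CP]]] := qpSpec_primeful sQ pp GrQp.
apply: (Gr_sub_prime pp _ GrKr) => s Ks; rewrite -CP => m.
by apply: (idealM_sub subP _ (KI _ (Ks m))); rewrite CP.
Qed.

Definition scaleM (a : R) : M -> Prop := fun m => exists m', m = a *: m'.

Lemma scaleM_graded a : hR GR a -> graded_submodule GM (scaleM a).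
Proof.
move=> [k Ha]; have K0 : scaleM a 0 by exists 0; rewrite scaler0.
split; first split => //; first split.
- by move=> _ _ [x ->] [y ->]; exists (x + y); rewrite scalerDr.
- by move=> r _ [x ->]; exists (r *: x); rewrite !scalerA mulrC.
apply/(graded_setP MD K0) => _ [x ->] g.
by exists (mc x (inv k ** g)); rewrite (mc_homogZl x g Ha).
Qed.

Lemma qpV_scaleM a Q : hR GR a -> qpSpec GM Q -> qpV_M GM (scaleM a) Q <-> GrC Q a.
Proof.
move=> ha sQ; split => [[_ GrQ] | GrQa]; last split => //.
  apply: GrQ; apply: graded_ideal_sub_Gr; first exact: colon_graded_ideal (scaleM_graded ha).
  by move=> m; exists m.
apply: Gr_colon_sub_GrC => // _ [m ->]; exists [:: (a, m)].
by split => [_ [<- | []] | ]; rewrite ?big_cons ?big_nil ?addr0.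
Qed.

Lemma Gr_colon_idealM_GrC Q : qpSpec GM Q -> Gr (colon (IM (GrC Q))) = GrC Q.
Proof.
move=> sQ; apply/predeqP => r; split; first exact: Gr_colon_sub_GrC.
rewrite -{1}(Gr_prime (qpSpec_GrC_prime sQ)); apply: Gr_mono => s GrQs m.
by exists [:: (s, m)]; split => [_ [<- | []] | ]; rewrite ?big_cons ?big_nil ?addr0.
Qed.

Lemma qpV_idealM_GrC Q0 Q : qpSpec GM Q0 ->
  qpV_M GM (IM (GrC Q0)) Q <-> qpSpec GM Q /\ subset (GrC Q0) (GrC Q).
Proof. by move=> sQ0; rewrite /qpV_M Gr_colon_idealM_GrC. Qed.

Lemma qp_irreducible_generic A Q0 : subset A (qpSpec GM) -> A Q0 ->
  (forall Q, A Q -> subset (GrC Q0) (GrC Q)) -> qp_irreducible GM A.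
Proof.
move=> As AQ0 gen; split => //; split; first by exists Q0.
move=> _ _ [K1 [_ ->]] [K2 [_ ->]] cover.
by case: (cover _ AQ0) => [[_ KQ0] | [_ KQ0]]; [left | right] => Q AQ;
  (split; [exact: As | move=> r /KQ0; apply: gen]).
Qed.

Lemma qpV_idealM_irreducible Q0 : qpSpec GM Q0 -> qp_irreducible GM (qpV_M GM (IM (GrC Q0))).
Proof.
move=> sQ0; apply: (qp_irreducible_generic (Q0 := Q0)) => [Q /(qpV_idealM_GrC _ sQ0) [] //| |].
- by apply/(qpV_idealM_GrC _ sQ0); split.
by move=> Q /(qpV_idealM_GrC _ sQ0) [].
Qed.

Definition ideal_of (C : (M -> Prop) -> Prop) : R -> Prop := fun r => forall Q, C Q -> GrC Q r.

Lemma Ann_sub_ideal_of C : subset C (qpSpec GM) -> subset (Ann M) (ideal_of C).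
Proof.
move=> Cs r Annr Q CQ; have [[gQ _] _] := Cs Q CQ.
apply: (graded_ideal_sub_Gr (colon_graded_ideal gQ)).
exact: (Ann_sub_colon (proj1 gQ) Annr).
Qed.

Lemma ideal_of_prime C : qp_irreducible GM C -> graded_prime_ideal GR (ideal_of C).
Proof.
move=> [Cs [[Q1 CQ1] irrC]].
have pC Q : C Q -> graded_prime_ideal GR (GrC Q) by move=> CQ; apply: qpSpec_GrC_prime; apply: Cs.
split; first by apply: graded_ideal_meet => Q CQ; case: (pC Q CQ).
split; first by move=> /(_ Q1 CQ1); apply: qpSpec_notGrC1; apply: Cs.
move=> a b ha hb Jab.
have closed_scaleM c : hR GR c -> qp_closed GM (qpV_M GM (scaleM c)).
  by move=> hc; exists (scaleM c); split => //; apply: scaleM_graded.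
have inV c Q : hR GR c -> C Q -> qpV_M GM (scaleM c) Q <-> GrC Q c.
  by move=> hc CQ; apply: qpV_scaleM hc (Cs Q CQ).
case: (irrC _ _ (closed_scaleM a ha) (closed_scaleM b hb)) => [Q CQ | CV | CV].
- have [_ [_ pP]] := pC Q CQ.
  by case: (pP a b ha hb (Jab Q CQ)) => ?; [left | right]; apply/inV.
- by left => Q CQ; apply/(inV a Q ha CQ)/CV.
by right => Q CQ; apply/(inV b Q hb CQ)/CV.
Qed.

Lemma sub_qpV_idealM C Q0 : subset C (qpSpec GM) -> qpSpec GM Q0 ->
  subset C (qpV_M GM (IM (GrC Q0))) <-> subset (GrC Q0) (ideal_of C).
Proof.
move=> Cs sQ0; split => [CV r Q0r Q CQ | Q0C Q CQ].
  by have /(qpV_idealM_GrC _ sQ0) [_] := CV Q CQ; apply.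
by apply/(qpV_idealM_GrC _ sQ0); split; [apply: Cs | move=> r /Q0C; apply].
Qed.

(* When M = 0 the realization property is vacuous, since then 1 is in Ann(M). *)
Lemma qprimaryful_realize : graded_qprimaryful GM ->
  forall q, qpV_R GR (Ann M) q -> exists Q, qpSpec GM Q /\ GrC Q = Gr q.
Proof.
case=> [M0 q [[_ [nq1 _]] Annq] | [_ realize] //].
by case: nq1; apply: Annq => m; apply: M0.
Qed.

Section Components.
Hypothesis realize :
  forall q, qpV_R GR (Ann M) q -> exists Q, qpSpec GM Q /\ GrC Q = Gr q.

Lemma prime_realized p : V_R GR (Ann M) p -> exists Q, qpSpec GM Q /\ GrC Q = p.
Proof.
move=> [pp Annp]; have [Q [sQ EQ]] := realize (conj (prime_qprimary pp) Annp).
by exists Q; rewrite EQ Gr_prime.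
Qed.

Lemma component_minimal A p : qp_irreducible_component GM A -> V_R GR (Ann M) p ->
  subset p (ideal_of A) -> p = ideal_of A /\ A = qpV_M GM (IM p).
Proof.
move=> [irrA maxA] Vp pA; have [As _] := irrA.
have [Q0 [sQ0 EQ0]] := prime_realized Vp; subst p.
have AV : subset A (qpV_M GM (IM (GrC Q0))) by apply/(sub_qpV_idealM As sQ0).
have EA := maxA _ (qpV_idealM_irreducible sQ0) AV.
have AQ0 : A Q0 by rewrite -EA; apply/(qpV_idealM_GrC _ sQ0); split.
split; last by rewrite EA.
by apply/predeqP => r; split => [/pA | /(_ Q0 AQ0)].
Qed.

Lemma component_Phi A : qp_irreducible_component GM A -> Phi GM A.
Proof.
move=> cA; have [irrA _] := cA; have [As _] := irrA.
have pJ := ideal_of_prime irrA; have AnnJ := Ann_sub_ideal_of As.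
exists (ideal_of A); rewrite Gr_prime //; split; first exact: conj (prime_qprimary pJ) AnnJ.
split; last by case: (component_minimal cA (conj pJ AnnJ) (fun r Jr => Jr)).
by split => // p Vp pJ'; case: (component_minimal cA Vp pJ').
Qed.

Lemma Phi_component A : Phi GM A -> qp_irreducible_component GM A.
Proof.
move=> [q [Vq [[VGrq minq] ->]]]; have [Q0 [sQ0 EQ0]] := realize Vq.
rewrite -EQ0 in VGrq minq *; split; first exact: qpV_idealM_irreducible.
move=> B irrB AB; have [Bs _] := irrB.
have BQ0 : B Q0 by apply: AB; apply/(qpV_idealM_GrC _ sQ0); split.
have EJ : ideal_of B = GrC Q0.
  apply: minq => [|r /(_ Q0 BQ0) //].
  by split; [exact: ideal_of_prime | exact: Ann_sub_ideal_of].
apply/predeqP => Q; split => [BQ | /AB //].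
by move: Q BQ; apply/(sub_qpV_idealM Bs sQ0); rewrite EJ.
Qed.

End Components.

End GradedModule.

End GradedRing.

Theorem theorem4p11 (G : Type) (GL : group_law G) (R : comPzRingType)
  (GR : graded_ring GL R) (M : lmodType R) (GM : graded_module GR M) :
  graded_qprimaryful GM ->
  qp_irreducible_component GM = Phi GM.
Proof.
move=> /qprimaryful_realize realize.
by apply/predeqP => A; split; [exact: component_Phi | exact: Phi_component].
Qed.
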